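(* Let $\lambda$ be a partition and let $T\xrightarrow{I}T'$ be an edge of the crystal skeleton $\mathsf{CS}(\lambda)$ with label the Dyck pattern interval $I$. Then there is an edge between $T$ and $T'$ in the dual equivalence graph $\mathsf{DE}(\lambda)$ if and only if $|I|=3$.
   Context: French notation; $|\lambda|=N$; $\mathsf{SYT}(\lambda)$ standard tableaux; reading word $\mathsf{row}(T)$ reads rows left to right from top row to bottom row. Standardization $\mathsf{std}$ of a semistandard tableau replaces the $a_j$ entries $j$, in reading order, by $a_1+\dots+a_{j-1}+1,\dots,a_1+\dots+a_j$. Crystal operator $f_i$ on semistandard tableaux: in the subword of $\mathsf{row}(b)$ of letters $i,i+1$, bracket each $i+1$ with an unbracketed $i$ to its right (parenthesis matching); $f_i$ changes the rightmost unbracketed $i$ to $i+1$. For a permutation $\pi$ of $[N]$ and $I=[i,i+2m]\subseteq[N]$, $m\ge1$, $I$ is a Dyck pattern interval of $\pi$ if the RSK insertion tableau of the subword $\pi|_I$ of letters in $I$ has bottom row $i,\dots,i+m$ and top row $i+m+1,\dots,i+2m$; a Dyck pattern interval of $T$ is one of $\mathsf{row}(T)$. The (labeled) crystal skeleton $\mathsf{CS}(\lambda)$ is the directed graph on $\mathsf{SYT}(\lambda)$ with, for each $T$ and each Dyck pattern interval $I=[i,i+2m]$ of $T$, an edge $T\xrightarrow{I}T'$ where $T'=\mathsf{std}(f_i(b))$ and $b$ is obtained from $T$ by replacing entries $i,\dots,i+m$ by $i$ and $i+m+1,\dots,i+2m$ by $i+1$. (Equivalently it is obtained from the crystal $B(\lambda)_n$,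 $n\ge N$, by contracting each quasi-crystal $\{b:\mathsf{std}(b)=T\}$ to a vertex.) The dual equivalence graph $\mathsf{DE}(\lambda)$ has vertex set $\mathsf{SYT}(\lambda)$ and an edge $T$—$D_i(T)$ for $1<i<N$, where on reading words $D_i$ acts by $\ldots i\ldots i{+}1\ldots i{-}1\ldots \leftrightarrow \ldots i{-}1\ldots i{+}1\ldots i\ldots$ and $\ldots i\ldots i{-}1\ldots i{+}1\ldots\leftrightarrow\ldots i{+}1\ldots i{-}1\ldots i\ldots$ (only the letters $i-1,i,i+1$ change), and is undefined otherwise. *)

From mathcomp Require Import all_boot.
Set Implicit Arguments. Unset Strict Implicit. Unset Printing Implicit Defensive.

(* Tableaux in French notation: a tableau is a list of rows, row 0 being the
   BOTTOM (longest) row; entries increase along rows (left to right) and up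
   columns. *)
Definition tableau := seq (seq nat).

Definition is_partition (la : seq nat) : bool :=
  sorted geq la && all (fun p => 0 < p) la.

Definition row_word (T : tableau) : seq nat := flatten (rev T).

Definition tab_of_word (sh : seq nat) (w : seq nat) : tableau :=
  rev (reshape (rev sh) w).

Definition is_SYT (la : seq nat) (T : tableau) : bool :=
  [&& map size T == la,
      all (sorted ltn) T,
      all (fun r => all (fun c => nth 0 (nth [::] T r) c < nth 0 (nth [::] T r.+1) c)
                        (iota 0 (size (nth [::] T r.+1))))
          (iota 0 (size T))
    & perm_eq (row_word T) (iota 1 (sumn la))].

Fixpoint rs_insert (t : tableau) (x : nat) : tableau :=
  match t with
  | [::] => [:: [:: x]]
  | r :: t' =>
      if has (fun y => x < y) r then
        let k := find (fun y => x < y) r in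
        set_nth 0 r k x :: rs_insert t' (nth 0 r k)
      else rcons r x :: t'
  end.

Definition RS (w : seq nat) : tableau := foldl rs_insert [::] w.

Definition dyck_interval (N : nat) (w : seq nat) (i m : nat) : bool :=
  [&& 0 < m, 0 < i, i + 2 * m <= N &
      RS [seq x <- w | i <= x <= i + 2 * m] == [:: iota i m.+1; iota (i + m + 1) m]].

(* position of the rightmost unbracketed letter i (each i+1 is bracketed
   with an unbracketed i to its right) *)
Fixpoint unbr_pos (i : nat) (w : seq nat) (open pos : nat) (acc : option nat)
  : option nat :=
  match w with
  | [::] => acc
  | x :: w' =>
      if x == i.+1 then unbr_pos i w' open.+1 pos.+1 acc
      else if x == i then
        (if 0 < open then unbr_pos i w' open.-1 pos.+1 acc
         else unbr_pos i w' open pos.+1 (Some pos))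
      else unbr_pos i w' open pos.+1 acc
  end.

Definition f_word (i : nat) (w : seq nat) : option (seq nat) :=
  match unbr_pos i w 0 0 None with
  | Some p => Some (set_nth 0 w p i.+1)
  | None => None
  end.

Definition f_tab (i : nat) (b : tableau) : option tableau :=
  match f_word i (row_word b) with
  | Some w => Some (tab_of_word (map size b) w)
  | None => None
  end.

Definition std_word (w : seq nat) : seq nat :=
  [seq (count (fun y => y < nth 0 w k) w
        + count (pred1 (nth 0 w k)) (take k w)).+1 | k <- iota 0 (size w)].

Definition std (b : tableau) : tableau := tab_of_word (map size b) (std_word (row_word b)).

Definition collapse (i m : nat) (T : tableau) : tableau :=
  map (map (fun x => if i <= x <= i + m then i
                     else if i + m < x <= i + 2 * m then i.+1 else x)) T.

Definition CS_edge (la : seq nat) (T : tableau) (i m : nat) (T' : tableau) : Prop :=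
  [/\ is_SYT la T, is_SYT la T', dyck_interval (sumn la) (row_word T) i m
    & exists b', f_tab i (collapse i m T) = Some b' /\ T' = std b'].

Definition swap_letters (a b : nat) (w : seq nat) : seq nat :=
  map (fun x => if x == a then b else if x == b then a else x) w.

Definition D_word (i : nat) (w : seq nat) : option (seq nat) :=
  let a := index i.-1 w in let b := index i w in let c := index i.+1 w in
  if ((b < c < a) || (a < c < b)) then Some (swap_letters i.-1 i w)
  else if ((b < a < c) || (c < a < b)) then Some (swap_letters i i.+1 w)
  else None.

Definition DE_edge (la : seq nat) (T T' : tableau) : Prop :=
  [/\ is_SYT la T, is_SYT la T'
    & exists i, [/\ 1 < i, i < sumn la & D_word i (row_word T) = Some (row_word T')]].

Definition DE_adjacent (la : seq nat) (T T' : tableau) : Prop :=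
  DE_edge la T T' \/ DE_edge la T' T.

From mathcomp Require Import all_boot zify.
Set Implicit Arguments. Unset Strict Implicit. Unset Printing Implicit Defensive.

(* Let w be the reading word of T and call i..i+m the small and i+m+1..i+2m
   the big letters of I.  Since the insertion tableau of w restricted to I has
   the small letters in row 0 and the big ones in row 1, the small letters
   occur in w in increasing order, so do the big ones, and every suffix of w
   has at least as many small as big letters.  After collapsing I to {i, i+1}
   the only unbracketed i is therefore the letter i+k at the first position
   where the prefix has more small than big letters, and standardizing
   f_i of the collapsed word relabels w by the cycle
   i+k -> i+m+k -> i+m+k-1 -> ... -> i+k+1 -> i+k.
   An elementary dual equivalence exchanges two consecutive values, which this
   cycle does only for m = 1; for m = 1 the positions of i, i+1, i+2 in w
   forced by the facts above are exactly those on which D_{i+1} acts as this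
   transposition. *)

Lemma count_take_drop (T : Type) (P : pred T) n (s : seq T) :
  count P (take n s) + count P (drop n s) = count P s.
Proof. by rewrite -count_cat cat_take_drop. Qed.

Lemma filter_take_count (T : Type) (P : pred T) n (s : seq T) :
  filter P (take n s) = take (count P (take n s)) (filter P s).
Proof.
by rewrite -{3}(cat_take_drop n s) filter_cat -size_filter take_size_cat.
Qed.

Lemma mem_take_count (T : eqType) (P : pred T) n (s : seq T) x : P x ->
  (x \in take n s) = (x \in take (count P (take n s)) (filter P s)).
Proof. by move=> Px; rewrite -filter_take_count mem_filter Px. Qed.

Lemma index_filter (T : eqType) (P : pred T) (s : seq T) x : P x ->
  index x (filter P s) = count P (take (index x s) s).
Proof.
move=> Px; have [xs|xNs] := boolP (x \in s); last first.
  by rewrite (memNindex xNs) take_size memNindex ?size_filter // mem_filter Px.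
rewrite -{1}(cat_take_drop (index x s) s) drop_index // filter_cat /= Px.
by rewrite index_cat mem_filter in_take // ltnn andbF /= eqxx addn0 size_filter.
Qed.

Lemma index_filter_ltn (T : eqType) (P : pred T) (s : seq T) x y :
  P x -> P y -> x \in s ->
  (index x (filter P s) < index y (filter P s)) = (index x s < index y s).
Proof.
move=> Px Py xs; rewrite -in_take ?mem_filter ?Px // -in_take // index_filter //.
by rewrite -filter_take_count mem_filter Px.
Qed.

Lemma index_in_iota a n x : a <= x < a + n -> index x (iota a n) = x - a.
Proof.
move=> xI; have e : nth 0 (iota a n) (x - a) = x by rewrite nth_iota; lia.
by rewrite -{1}e index_uniq ?iota_uniq ?size_iota //; lia.
Qed.

Lemma index_ltn_filter_iota (P : pred nat) (s : seq nat) a n x y :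
  filter P s = iota a n -> P x -> P y -> x \in s -> y \in s ->
  (index x s < index y s) = (x < y).
Proof.
move=> sP Px Py xs ys; rewrite -(index_filter_ltn Px Py xs) sP.
have: x \in iota a n by rewrite -sP mem_filter Px.
have: y \in iota a n by rewrite -sP mem_filter Py.
by rewrite !mem_iota => yI xI; rewrite !index_in_iota //; lia.
Qed.

Lemma sorted_filter_leq (P : pred nat) (s : seq nat) :
  (forall v a b r, s = v ++ b :: r -> a \in v -> P a -> P b -> a <= b) ->
  sorted leq (filter P s).
Proof.
elim/last_ind: s => [|s x IH] //= noinv.
have {}IH : sorted leq (filter P s).
  by apply: IH => v a b r es; apply: noinv; rewrite es rcons_cat.
rewrite filter_rcons; case: ifP => Px //.
rewrite (sorted_pairwise leq_trans) pairwise_rcons -(sorted_pairwise leq_trans) IH andbT.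
apply/allP => a; rewrite mem_filter => /andP[Pa aS].
by apply: (noinv s a x [::]); rewrite ?cats1.
Qed.

Lemma filter_sorted_iota (P : pred nat) (s : seq nat) a n :
  uniq s -> sorted leq (filter P s) ->
  (forall x, (P x && (x \in s)) = (a <= x < a + n)) -> filter P s = iota a n.
Proof.
move=> us srt mem; apply: (irr_sorted_eq ltn_trans ltnn).
- by rewrite ltn_sorted_uniq_leq filter_uniq.
- exact: iota_ltn_sorted.
- by move=> x; rewrite mem_filter mem mem_iota.
Qed.

Lemma count_take_index (T : eqType) (P : pred T) (s : seq T) n : uniq s ->
  count P (take n s) = count (fun y => P y && (index y s < n)) s.
Proof.
move=> s_uniq; have := s_uniq; rewrite -{1 4}(cat_take_drop n s) count_cat.
rewrite cat_uniq => /and3P[_ disj _].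
rewrite (@eq_in_count _ _ P (take n s)) => [|y yt]; last first.
  by rewrite -in_take ?(mem_take yt) ?yt ?andbT.
rewrite (@eq_in_count _ _ pred0 (drop n s)) ?count_pred0 ?addn0 // => y yd.
rewrite -in_take ?(mem_drop yd) //; apply/andP => -[_ yt].
by case/hasP: disj; exists y.
Qed.

Lemma set_nth_map (f : nat -> nat) (w : seq nat) p y : uniq w -> p < size w ->
  set_nth 0 (map f w) p y = map (fun x => if x == nth 0 w p then y else f x) w.
Proof.
move=> w_uniq p_lt; apply: (@eq_from_nth _ 0) => [|q].
  by rewrite size_set_nth !size_map; apply/maxn_idPr.
rewrite size_set_nth size_map (maxn_idPr p_lt) => q_lt.
by rewrite nth_set_nth /= !(nth_map 0) // nth_uniq.
Qed.

(** * Row insertion into tableaux with at most two rows *)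

Notation row0 t := (nth [::] t 0).
Notation row1 t := (nth [::] t 1).
Notation bump x r := (find (fun y => x < y) r).
Notation bumped x r := (nth 0 r (bump x r)).

Lemma row0_insert t x : row0 (rs_insert t x) =
  if has (fun y => x < y) (row0 t) then set_nth 0 (row0 t) (bump x (row0 t)) x
  else rcons (row0 t) x.
Proof. by case: t => [|r t] //=; case: ifP. Qed.

Lemma row1_insert t x : row1 (rs_insert t x) =
  if has (fun y => x < y) (row0 t) then
    let y := bumped x (row0 t) in
    if has (fun z => y < z) (row1 t) then set_nth 0 (row1 t) (bump y (row1 t)) y
    else rcons (row1 t) y
  else row1 t.
Proof. by case: t => [|r [|r' t]] //=; case: ifP => //; case: ifP. Qed.

Lemma size_insert t x : size t <= size (rs_insert t x).
Proof. by elim: t x => [|r t IH] x //=; case: ifP => //= _; apply: IH. Qed.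

Lemma insert_no_second_bump t x : size (rs_insert t x) <= 2 ->
  has (fun y => x < y) (row0 t) -> ~~ has (fun z => bumped x (row0 t) < z) (row1 t).
Proof.
by case: t => [|r [|r' [|r'' t]]] //=; case: ifP => //= _; case: ifP => // _; case: ifP.
Qed.

Lemma mem_row1_insert t x z : size (rs_insert t x) <= 2 ->
  z \in row1 t -> z \in row1 (rs_insert t x).
Proof.
move=> two z1; rewrite row1_insert; case: ifP => // hasx /=.
by rewrite (negbTE (insert_no_second_bump two hasx)) mem_rcons inE z1 orbT.
Qed.

Lemma mem_row0_insert_self t x : x \in row0 (rs_insert t x).
Proof.
rewrite row0_insert; case: ifP => hasx; last by rewrite mem_rcons mem_head.
have e : nth 0 (set_nth 0 (row0 t) (bump x (row0 t)) x) (bump x (row0 t)) = x.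
  by rewrite nth_set_nth /= eqxx.
by rewrite -{1}e mem_nth // size_set_nth leq_max -has_find hasx orbT.
Qed.

Lemma mem_row0_insert t x z : size (rs_insert t x) <= 2 -> z \in row0 t ->
  z \in row0 (rs_insert t x) \/
  z \in row1 (rs_insert t x) /\ ~~ has (fun y => z < y) (row1 t).
Proof.
move=> two z0; rewrite row0_insert row1_insert; case: ifP => hasx; last first.
  by left; rewrite mem_rcons inE z0 orbT.
have [<-|zNbumped] := eqVneq (bumped x (row0 t)) z.
  by right; rewrite /= (negbTE (insert_no_second_bump two hasx)) mem_rcons mem_head.
have k_lt : bump x (row0 t) < size (row0 t) by rewrite -has_find.
left; move: z0; rewrite -{1}(cat_take_drop (bump x (row0 t)) (row0 t)) (drop_nth 0 k_lt).
rewrite set_nthE k_lt !mem_cat !inE eq_sym (negbTE zNbumped) /=.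
by case/orP=> ->; rewrite ?orbT.
Qed.

Lemma sorted_row0_insert t x : sorted leq (row0 t) -> sorted leq (row0 (rs_insert t x)).
Proof.
move=> srt; rewrite row0_insert; set r := row0 t in srt *; case: ifP => hasx; last first.
  rewrite (sorted_pairwise leq_trans) pairwise_rcons -(sorted_pairwise leq_trans) srt andbT.
  by apply/allP => y yr; rewrite leqNgt; apply: contraFN hasx => xy; apply/hasP; exists y.
set k := bump x r; have k_lt : k < size r by rewrite -has_find.
have mono a b : a <= b -> b < size r -> nth 0 r a <= nth 0 r b.
  by move=> ab b_lt; apply: (sorted_leq_nth leq_trans leqnn) => //; rewrite inE; lia.
have x_lt : x < nth 0 r k by apply: (nth_find 0 hasx).
have before j : j < k -> nth 0 r j <= x by move/(before_find 0)/negbT; rewrite -leqNgt.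
apply/(sortedP 0) => j; rewrite size_set_nth (maxn_idPr k_lt) => j_lt.
rewrite !nth_set_nth /=; case: eqP => [jk|_]; case: eqP => [j1k|_]; try lia.
- by rewrite jk; apply/ltnW/(leq_trans x_lt)/mono; lia.
- by apply: before; lia.
- exact: mono.
Qed.

Lemma insert_bump_row1 t x z : size (rs_insert t x) <= 2 -> sorted leq (row0 t) ->
  z \in row0 t -> x < z -> exists2 y, y \in row1 (rs_insert t x) & x < y <= z.
Proof.
move=> two srt z0 xz; have hasx : has (fun y => x < y) (row0 t) by apply/hasP; exists z.
exists (bumped x (row0 t)).
  by rewrite row1_insert hasx /= (negbTE (insert_no_second_bump two hasx)) mem_rcons mem_head.
rewrite (nth_find 0 hasx) -(nth_index 0 z0) /=.
apply: (sorted_leq_nth leq_trans leqnn) => //; rewrite ?inE ?index_mem -?has_find //.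
by rewrite leqNgt; apply/negP => /(before_find 0); rewrite nth_index // xz.
Qed.

Lemma mem_row0_insertP t x z : z \in row0 (rs_insert t x) -> z = x \/ z \in row0 t.
Proof.
rewrite row0_insert; case: ifP => [hasx|_]; last by rewrite mem_rcons inE => /predU1P.
rewrite set_nthE -has_find hasx !mem_cat inE => /or3P[zt|/eqP|zd]; auto.
- by right; apply: mem_take zt.
- by right; apply: mem_drop zd.
Qed.

Lemma count_row0_insert (P : pred nat) t x :
  count P (row0 t) <= (count P (row0 (rs_insert t x))).+1.
Proof.
rewrite row0_insert; case: ifP => [hasx|_]; last by rewrite -cats1 count_cat; lia.
by rewrite count_set_nth_ltn -?has_find //; lia.
Qed.

Lemma count_row0_append (P : pred nat) t x : ~~ has (fun y => x < y) (row0 t) ->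
  count P (row0 (rs_insert t x)) = count P (row0 t) + P x.
Proof. by rewrite row0_insert => /negbTE ->; rewrite -cats1 count_cat /= addn0. Qed.

Lemma RS_rcons v x : RS (rcons v x) = rs_insert (RS v) x.
Proof. by rewrite /RS -cats1 foldl_cat. Qed.

Lemma size_RS_rcons v x : size (RS v) <= size (RS (rcons v x)).
Proof. by rewrite RS_rcons size_insert. Qed.

Lemma size_RS_cat v r : size (RS v) <= size (RS (v ++ r)).
Proof.
elim/last_ind: r => [|r x IH]; first by rewrite cats0.
by rewrite -rcons_cat (leq_trans IH) ?size_RS_rcons.
Qed.

Lemma sorted_row0_RS v : sorted leq (row0 (RS v)).
Proof. by elim/last_ind: v => [|v x IH] //; rewrite RS_rcons sorted_row0_insert. Qed.

Lemma mem_row0_RS v z : z \in row0 (RS v) -> z \in v.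
Proof.
elim/last_ind: v => [|v x IH] //; rewrite RS_rcons mem_rcons inE.
by case/mem_row0_insertP => [->|/IH ->]; rewrite ?eqxx ?orbT.
Qed.

Lemma mem_RS_rows v a : size (RS v) <= 2 -> a \in v ->
  a \in row0 (RS v) \/ a \in row1 (RS v).
Proof.
elim/last_ind: v => [|v x IH] //; rewrite RS_rcons => two.
have two' : size (RS v) <= 2 by apply: leq_trans two; apply: size_insert.
rewrite mem_rcons inE => /predU1P[->|av]; first by left; apply: mem_row0_insert_self.
case: (IH two' av) => [/(mem_row0_insert two)[|[]]|/(mem_row1_insert two)]; auto.
Qed.

Lemma mem_row1_RS_cat v r z : size (RS (v ++ r)) <= 2 ->
  z \in row1 (RS v) -> z \in row1 (RS (v ++ r)).
Proof.
elim/last_ind: r => [|r x IH]; first by rewrite cats0.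
rewrite -rcons_cat RS_rcons => two z1; apply: (mem_row1_insert two).
by apply: IH z1; apply: leq_trans two; apply: size_insert.
Qed.

Lemma mem_row0_RS_cat v r z : size (RS (v ++ r)) <= 2 ->
  z \in row0 (RS v) -> has (fun y => z < y) (row1 (RS v)) -> z \in row0 (RS (v ++ r)).
Proof.
move=> two z0 /hasP[y y1 zy]; elim/last_ind: r two => [|r x IH]; first by rewrite cats0.
rewrite -rcons_cat RS_rcons => two.
have two' : size (RS (v ++ r)) <= 2 by apply: leq_trans two; apply: size_insert.
case: (mem_row0_insert two (IH two')) => [//|[_ /hasP[]]].
by exists y; first exact: mem_row1_RS_cat y1.
Qed.

(* The letter that b bumps (or a itself) stays in row 1 from then on, and b
   never leaves row 0: bumping it would create a third row. *)
Lemma RS_inversion u v a b r : size (RS u) <= 2 -> u = v ++ b :: r -> a \in v -> b < a ->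
  b \in row0 (RS u) /\ exists2 y, y \in row1 (RS u) & b < y <= a.
Proof.
move=> two eu av ba; have {}eu : u = rcons v b ++ r by rewrite eu cat_rcons.
have two_b : size (RS (rcons v b)) <= 2 by apply: leq_trans two; rewrite eu size_RS_cat.
have two_v : size (RS v) <= 2 by apply: leq_trans two_b; apply: size_RS_rcons.
rewrite RS_rcons in two_b.
have [y y1 hy] : exists2 y, y \in row1 (RS (rcons v b)) & b < y <= a.
  rewrite RS_rcons; case: (mem_RS_rows two_v av) => a_row.
  - exact: insert_bump_row1 two_b (sorted_row0_RS v) a_row ba.
  - by exists a; [apply: mem_row1_insert | rewrite ba leqnn].
rewrite eu; split; last by exists y => //; apply: mem_row1_RS_cat; rewrite -?eu.
apply: mem_row0_RS_cat; rewrite -?eu ?RS_rcons ?mem_row0_insert_self //.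
by apply/hasP; exists y; rewrite -?RS_rcons //; case/andP: hy.
Qed.

(** * Dyck patterns *)

Definition small i m : pred nat := fun x => i <= x <= i + m.
Definition big i m : pred nat := fun x => i + m < x <= i + 2 * m.
Definition in_interval i m : pred nat := fun x => i <= x <= i + 2 * m.

Section DyckTableau.

Variables (i m : nat) (u : seq nat).
Hypothesis RS_u : RS u = [:: iota i m.+1; iota (i + m + 1) m].

Let two_rows : size (RS u) <= 2. Proof. by rewrite RS_u. Qed.
Let row0_RS_u : row0 (RS u) = iota i m.+1. Proof. by rewrite RS_u. Qed.
Let row1_RS_u : row1 (RS u) = iota (i + m + 1) m. Proof. by rewrite RS_u. Qed.

Lemma small_no_inversion v a b r : u = v ++ b :: r -> a \in v ->
  small i m a -> small i m b -> a <= b.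
Proof.
move=> eu av /andP[_ a_le] /andP[b_ge _]; rewrite leqNgt; apply/negP => ba.
have [_ [y]] := RS_inversion two_rows eu av ba.
by rewrite row1_RS_u mem_iota; lia.
Qed.

Lemma big_no_inversion v a b r : u = v ++ b :: r -> a \in v ->
  big i m a -> big i m b -> a <= b.
Proof.
move=> eu av _ b_big; rewrite leqNgt; apply/negP => ba.
have [] := RS_inversion two_rows eu av ba.
by rewrite row0_RS_u mem_iota; move: b_big; rewrite /big; lia.
Qed.

(* A big letter is never smaller than a letter already in row 0, so it is
   appended there, while a small letter bumps at most one big letter. *)
Lemma ballot_RS v r : all (in_interval i m) u -> u = v ++ r ->
  count (big i m) (row0 (RS v)) + count (big i m) r <= count (small i m) r.
Proof.
move=> uI; elim: r v => [|x r IH] v eu.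
  rewrite cats0 in eu; rewrite -eu row0_RS_u addn0.
  by rewrite (eq_in_count (a2 := pred0)) ?count_pred0 // => y; rewrite mem_iota /big /=; lia.
have := IH (rcons v x); rewrite cat_rcons RS_rcons => /(_ eu) /=.
have xI : in_interval i m x by apply: (allP uI); rewrite eu mem_cat mem_head orbT.
case x_big: (big i m x).
  have x_last : ~~ has (fun y => x < y) (row0 (RS v)).
    apply/hasP => -[a /mem_row0_RS av]; rewrite ltnNge.
    have aI : in_interval i m a by apply: (allP uI); rewrite eu mem_cat av.
    case a_big: (big i m a); first by rewrite (big_no_inversion eu av).
    by move: a_big x_big aI; rewrite /big /in_interval; lia.
  have x_small : small i m x = false by move: x_big; rewrite /big /small; lia.
  by rewrite count_row0_append // x_big x_small; lia.
have x_small : small i m x by move: x_big xI; rewrite /big /in_interval /small; lia.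
rewrite x_small.
by have := count_row0_insert (big i m) (RS v) x; lia.
Qed.

End DyckTableau.

(** * Bracketing and standardization *)

Definition collapse_letter i m x :=
  if i <= x <= i + m then i else if i + m < x <= i + 2 * m then i.+1 else x.

Lemma collapse_letter_eq i m x : (collapse_letter i m x == i) = small i m x.
Proof. by rewrite /collapse_letter /small; repeat case: ifP => ?; lia. Qed.

Lemma collapse_letter_eqS i m x : 0 < m -> (collapse_letter i m x == i.+1) = big i m x.
Proof. by rewrite /collapse_letter /big => m_gt0; repeat case: ifP => ?; lia. Qed.

Lemma count_collapse_eq i m s :
  count (pred1 i) (map (collapse_letter i m) s) = count (small i m) s.
Proof. by rewrite count_map; apply: eq_count => x; apply: collapse_letter_eq. Qed.

Lemma count_collapse_eqS i m s : 0 < m ->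
  count (pred1 i.+1) (map (collapse_letter i m) s) = count (big i m) s.
Proof.
by move=> m_gt0; rewrite count_map; apply: eq_count => x; apply: collapse_letter_eqS.
Qed.

(* If every i of W is bracketed by an i+1 to its left, o of which are still
   open before W, then scanning W records no unbracketed position. *)
Lemma unbr_pos_cat i W R o pos acc :
  (forall n, n < size W -> nth 0 W n = i ->
     count (pred1 i) (take n W) < o + count (pred1 i.+1) (take n W)) ->
  exists2 o', o' + count (pred1 i) W = o + count (pred1 i.+1) W &
    unbr_pos i (W ++ R) o pos acc = unbr_pos i R o' (pos + size W) acc.
Proof.
elim: W o pos => [|x W IH] o pos bracketed; first by exists o; rewrite ?addn0.
have head_ok : x = i -> 0 < o by move/(bracketed 0 isT); rewrite addn0.
have [o1 o1E step] : exists2 o1, o1 + (x == i) = o + (x == i.+1) &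
    unbr_pos i ((x :: W) ++ R) o pos acc = unbr_pos i (W ++ R) o1 pos.+1 acc.
  case: (eqVneq x i.+1) => [->|xNSi].
    by exists o.+1; rewrite /= ?eqxx ?(gtn_eqF (ltnSn i)) ?addn0 ?addn1.
  case: (eqVneq x i) => [xi|xNi].
    exists o.-1; last by rewrite /= (negbTE xNSi) xi eqxx head_ok.
    by have := head_ok xi; rewrite /=; lia.
  by exists o; rewrite /= ?(negbTE xNSi) ?(negbTE xNi).
have premise n : n < size W -> nth 0 W n = i ->
    count (pred1 i) (take n W) < o1 + count (pred1 i.+1) (take n W).
  by move=> n_lt nth_i; move: o1E (bracketed n.+1 n_lt nth_i) => /=; lia.
have [o' o'E rest] := IH o1 pos.+1 premise.
by exists o'; [move: o1E o'E => /=; lia | rewrite step rest addSnnS].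
Qed.

Lemma size_std_word v : size (std_word v) = size v.
Proof. by rewrite /std_word size_map size_iota. Qed.

Lemma perm_map_iota (phi : nat -> nat) (w : seq nat) : uniq w ->
  {in w &, injective phi} -> (forall x, x \in w -> 0 < phi x <= size w) ->
  perm_eq (map phi w) (iota 1 (size w)).
Proof.
move=> w_uniq phi_inj phi_range.
have phi_uniq : uniq (map phi w) by rewrite (map_inj_in_uniq phi_inj).
have phi_sub : {subset map phi w <= iota 1 (size w)}.
  by move=> _ /mapP[x xw ->]; rewrite mem_iota; have := phi_range x xw; lia.
have phi_size : size (iota 1 (size w)) <= size (map phi w) by rewrite size_iota size_map.
have [_ phi_mem] := uniq_min_size phi_uniq phi_sub phi_size.
by apply: uniq_perm; rewrite ?iota_uniq.
Qed.

Lemma std_word_map (h phi : nat -> nat) (w : seq nat) : uniq w ->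
  (forall x, x \in w -> 0 < phi x <= size w) ->
  (forall x y, x \in w -> y \in w ->
     (h y < h x) || (h y == h x) && (index y w < index x w) = (phi y < phi x)) ->
  std_word (map h w) = map phi w.
Proof.
move=> w_uniq phi_range phi_lex.
have phi_inj : {in w &, injective phi}.
  move=> x y xw yw e; apply: (index_inj 0 xw yw).
  move: (phi_lex x y xw yw) (phi_lex y x yw xw); rewrite e ltnn.
  by case: (ltngtP (h x) (h y)); case: ltngtP.
have phi_perm := perm_map_iota w_uniq phi_inj phi_range.
apply: (@eq_from_nth _ 0) => [|q]; first by rewrite size_std_word !size_map.
rewrite size_std_word size_map => q_lt.
rewrite /std_word (nth_map 0) ?size_iota ?size_map // nth_iota ?size_map // add0n.
rewrite !(nth_map 0) //; set x := nth 0 w q; have xw : x \in w by apply: mem_nth.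
rewrite -map_take !count_map -(index_uniq 0 q_lt w_uniq) -/x count_take_index //.
rewrite -count_predUI (@eq_count _ (predI _ _) pred0) ?count_pred0 ?addn0; last first.
  by move=> y /=; case: ltngtP.
rewrite (@eq_in_count _ _ (fun y => phi y < phi x)) => [|y yw]; last by rewrite -phi_lex.
rewrite -(count_map phi (fun z => z < phi x)) (permP phi_perm).
have := phi_range x xw => /andP[phi_gt0 phi_le].
by rewrite -size_filter -[phi x](subnKC phi_gt0) filter_iota_ltn ?size_iota; lia.
Qed.

Definition cycle_letter a b x := if x == a then b else if a < x <= b then x.-1 else x.

Lemma cycle_letter_ltn a b x y : x != a -> y != a ->
  (cycle_letter a b y < cycle_letter a b x) = (y < x).
Proof.
by move=> xa ya; rewrite /cycle_letter (negbTE xa) (negbTE ya); do 2!case: ifP => ?; lia.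
Qed.

Lemma cycle_letter_ltn_l a b y : a <= b -> y != a ->
  (cycle_letter a b y < cycle_letter a b a) = (y <= b).
Proof. by move=> ? ya; rewrite /cycle_letter eqxx (negbTE ya); case: ifP => ?; lia. Qed.

Lemma cycle_letter_ltn_r a b x : a <= b -> x != a ->
  (cycle_letter a b a < cycle_letter a b x) = (b < x).
Proof. by move=> ? xa; rewrite /cycle_letter eqxx (negbTE xa); case: ifP => ?; lia. Qed.

(* The letter of f_i (collapse w) at the position of x, when the letter
   changed by f_i is the collapse of i + k. *)
Definition fcollapse_letter i m k x := if x == i + k then i.+1 else collapse_letter i m x.

Lemma fcollapse_cycle_ltn i m k x y : 0 < m -> k <= m ->
  fcollapse_letter i m k y != fcollapse_letter i m k x ->
  (fcollapse_letter i m k y < fcollapse_letter i m k x) =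
  (cycle_letter (i + k) (i + m + k) y < cycle_letter (i + k) (i + m + k) x).
Proof.
rewrite /fcollapse_letter /collapse_letter /cycle_letter => m_gt0 k_le.
by repeat case: ifP => ?; lia.
Qed.

Lemma fcollapse_letter_eq_cases i m k x y : 0 < m -> k <= m ->
  fcollapse_letter i m k y = fcollapse_letter i m k x ->
  [\/ y = x, [&& small i m x, small i m y, x != i + k & y != i + k] |
      (big i m x || (x == i + k)) && (big i m y || (y == i + k))].
Proof.
rewrite /fcollapse_letter /collapse_letter /small /big => m_gt0 k_le.
by repeat case: ifP => ?; move=> e;
  first [by constructor 1 | by constructor 2 | by constructor 3; rewrite ?orbT | lia].
Qed.

(* p is the first position at which the prefix of w has more small than big
   letters; [unbr_pos_collapse] shows that the collapsed word has its only
   unbracketed i there. *)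
Definition unbracketed_at (i m : nat) (w : seq nat) (p k : nat) : Prop :=
  [/\ p < size w, nth 0 w p = i + k,
      count (small i m) (take p w) = k, count (big i m) (take p w) = k &
      forall n, n <= p -> count (small i m) (take n w) <= count (big i m) (take n w)].

Section DyckWord.

Variables (N i m : nat) (w : seq nat).
Hypotheses (w_perm : perm_eq w (iota 1 N)) (w_dyck : dyck_interval N w i m).

Let m_gt0 : 0 < m. Proof. by case/and4P: w_dyck. Qed.
Let i_gt0 : 0 < i. Proof. by case/and4P: w_dyck. Qed.
Let iN : i + 2 * m <= N. Proof. by case/and4P: w_dyck. Qed.
Let RS_w : RS (filter (in_interval i m) w) = [:: iota i m.+1; iota (i + m + 1) m].
Proof. by case/and4P: w_dyck => _ _ _ /eqP. Qed.
Let w_uniq : uniq w. Proof. by rewrite (perm_uniq w_perm) iota_uniq. Qed.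

Lemma mem_word x : (x \in w) = (0 < x <= N).
Proof. by rewrite (perm_mem w_perm) mem_iota; lia. Qed.

Lemma size_word : size w = N.
Proof. by rewrite (perm_size w_perm) size_iota. Qed.

Lemma filter_small_dyck : filter (small i m) w = iota i m.+1.
Proof.
apply: filter_sorted_iota => // [|x]; last by rewrite mem_word /small; lia.
have -> : filter (small i m) w = filter (small i m) (filter (in_interval i m) w).
  by rewrite -filter_predI; apply: eq_filter => x; rewrite /= /small /in_interval; lia.
exact: sorted_filter_leq (small_no_inversion RS_w).
Qed.

Lemma filter_big_dyck : filter (big i m) w = iota (i + m + 1) m.
Proof.
apply: filter_sorted_iota => // [|x]; last by rewrite mem_word /big; lia.
have -> : filter (big i m) w = filter (big i m) (filter (in_interval i m) w).
  by rewrite -filter_predI; apply: eq_filter => x; rewrite /= /big /in_interval; lia.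
exact: sorted_filter_leq (big_no_inversion RS_w).
Qed.

Lemma count_small_dyck : count (small i m) w = m.+1.
Proof. by rewrite -size_filter filter_small_dyck size_iota. Qed.

Lemma count_big_dyck : count (big i m) w = m.
Proof. by rewrite -size_filter filter_big_dyck size_iota. Qed.

Lemma ballot_dyck n : count (big i m) (drop n w) <= count (small i m) (drop n w).
Proof.
have count_interval (P : pred nat) : subpred P (in_interval i m) ->
    count P (drop n w) = count P (filter (in_interval i m) (drop n w)).
  by move=> PI; rewrite count_filter; apply: eq_count => x /=; case Px: (P x); rewrite //= PI.
have small_I : subpred (small i m) (in_interval i m).
  by move=> x; rewrite /small /in_interval; lia.
have big_I : subpred (big i m) (in_interval i m).
  by move=> x; rewrite /big /in_interval; lia.
rewrite (count_interval _ small_I) (count_interval _ big_I).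
have split_w : filter (in_interval i m) w =
    filter (in_interval i m) (take n w) ++ filter (in_interval i m) (drop n w).
  by rewrite -filter_cat cat_take_drop.
exact: leq_trans (leq_addl _ _) (ballot_RS RS_w (filter_all _ _) split_w).
Qed.

Lemma exists_unbracketed : exists p k, unbracketed_at i m w p k.
Proof.
pose P n := count (big i m) (take n w) < count (small i m) (take n w).
have PN : P N by rewrite /P take_oversize ?size_word // count_small_dyck count_big_dyck.
case: (ex_minnP (ex_intro P N PN)) => n0 Pn0 n0_min.
have n0_gt0 : 0 < n0 by move: Pn0; case: n0 {n0_min} => //; rewrite /P take0.
have p_lt : n0.-1 < size w by have := n0_min N PN; rewrite size_word; lia.
have prefix n : n <= n0.-1 -> count (small i m) (take n w) <= count (big i m) (take n w).
  by move=> n_le; rewrite leqNgt; apply/negP => /n0_min; lia.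
move: Pn0; rewrite /P -(prednK n0_gt0) (take_nth 0 p_lt) -!cats1 !count_cat /= !addn0.
have := prefix _ (leqnn _); set x := nth 0 w n0.-1.
case x_small: (small i m x); case x_big: (big i m x) => /= cS_le cS_gt; try lia.
exists n0.-1, (count (small i m) (take n0.-1 w)); split => //; try lia.
have := index_filter w x_small; rewrite filter_small_dyck index_uniq // index_in_iota.
  by move=> <-; rewrite -/x; move: x_small; rewrite /small; lia.
by move: x_small; rewrite /small; lia.
Qed.

Lemma mem_small_dyck x : small i m x -> x \in w.
Proof. by rewrite mem_word /small; lia. Qed.

Lemma mem_big_dyck x : big i m x -> x \in w.
Proof. by rewrite mem_word /big; lia. Qed.

Lemma index_small_ltn x y : small i m x -> small i m y ->
  (index x w < index y w) = (x < y).
Proof.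
by move=> xs ys; rewrite (index_ltn_filter_iota filter_small_dyck) ?mem_small_dyck.
Qed.

Lemma index_big_ltn x y : big i m x -> big i m y -> (index x w < index y w) = (x < y).
Proof. by move=> xb yb; rewrite (index_ltn_filter_iota filter_big_dyck) ?mem_big_dyck. Qed.

Lemma mem_take_big n x : big i m x ->
  (x \in take n w) = (x < i + m + 1 + count (big i m) (take n w)).
Proof.
move=> xb; rewrite (mem_take_count _ _ xb) filter_big_dyck take_iota mem_iota.
by set c := count _ _; move: xb; rewrite /big; lia.
Qed.

Lemma count_small_take_index y : small i m y ->
  count (small i m) (take (index y w).+1 w) = (y - i).+1.
Proof.
move=> ys; have yw := mem_small_dyck ys.
rewrite (take_nth 0) ?index_mem // nth_index // -cats1 count_cat /= ys.
rewrite -index_filter // filter_small_dyck index_in_iota //.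
  by rewrite addn0 addn1.
by move: ys; rewrite /small; lia.
Qed.

Lemma index_big_ltn_last x : big i m x -> index x w < index (i + m) w.
Proof.
move=> xb; set n := (index (i + m) w).+1.
have im_small : small i m (i + m) by rewrite /small; lia.
have big_all : count (big i m) (take n w) = m.
  move: (count_take_drop (small i m) n w) (count_take_drop (big i m) n w) (ballot_dyck n).
  by rewrite count_small_take_index // count_small_dyck count_big_dyck; lia.
have : x \in take n w by rewrite mem_take_big // big_all; move: xb; rewrite /big; lia.
rewrite in_take ?mem_big_dyck // ltnS leq_eqVlt => /predU1P[e|//].
have := index_inj 0 (mem_big_dyck xb) (mem_small_dyck im_small) e.
by move: xb; rewrite /big; lia.
Qed.

Section Unbracketed.

Variables p k : nat.
Hypothesis p_unbr : unbracketed_at i m w p k.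

Let p_lt : p < size w. Proof. by case: p_unbr. Qed.
Let nth_p : nth 0 w p = i + k. Proof. by case: p_unbr. Qed.
Let count_small_p : count (small i m) (take p w) = k. Proof. by case: p_unbr. Qed.
Let count_big_p : count (big i m) (take p w) = k. Proof. by case: p_unbr. Qed.
Let prefix_balanced n : n <= p ->
  count (small i m) (take n w) <= count (big i m) (take n w).
Proof. by case: p_unbr => _ _ _ _; apply. Qed.
Let k_le_m : k <= m.
Proof. by have := count_take_drop (big i m) p w; rewrite count_big_p count_big_dyck; lia. Qed.

Lemma index_unbracketed : index (i + k) w = p.
Proof. by rewrite -nth_p index_uniq. Qed.

Lemma index_big_ltn_unbracketed x : big i m x -> (index x w < p) = (x <= i + m + k).
Proof. by move=> xb; rewrite -in_take ?mem_big_dyck // mem_take_big // count_big_p; lia. Qed.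

Lemma index_big_ltn_small j : j < k -> index (i + m + 1 + j) w < index (i + j) w.
Proof.
move=> jk; have js : small i m (i + j) by rewrite /small; lia.
have jb : big i m (i + m + 1 + j) by rewrite /big; lia.
have idx_lt : index (i + j) w < p.
  by rewrite -index_unbracketed index_small_ltn //; [lia | rewrite /small; lia].
have := prefix_balanced idx_lt; rewrite count_small_take_index // => big_ge.
have : i + m + 1 + j \in take (index (i + j) w).+1 w by rewrite mem_take_big //; lia.
rewrite in_take ?mem_big_dyck // ltnS leq_eqVlt => /predU1P[e|//].
by have := index_inj 0 (mem_big_dyck jb) (mem_small_dyck js) e; lia.
Qed.

Lemma prefix_bracketed n : n < p -> small i m (nth 0 w n) ->
  count (small i m) (take n w) < count (big i m) (take n w).
Proof.
move=> n_lt n_small.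
have n_big : big i m (nth 0 w n) = false by move: n_small; rewrite /small /big; lia.
have := prefix_balanced n_lt.
by rewrite (take_nth 0 (ltn_trans n_lt p_lt)) -!cats1 !count_cat /= n_small n_big; lia.
Qed.

Lemma suffix_bracketed n : p.+1 + n < size w -> small i m (nth 0 w (p.+1 + n)) ->
  count (small i m) (take n (drop p.+1 w)) < count (big i m) (take n (drop p.+1 w)).
Proof.
move=> q_lt q_small.
have split_w P : count P w = count P (take p w) + P (i + k) + count P (take n (drop p.+1 w))
    + (P (nth 0 w (p.+1 + n)) + count P (drop (p.+1 + n).+1 w)).
  rewrite -[in LHS](cat_take_drop (p.+1 + n) w) (drop_nth 0 q_lt) takeD (take_nth 0 p_lt).
  by rewrite nth_p -cats1 !count_cat /=; lia.
have q_big : big i m (nth 0 w (p.+1 + n)) = false by move: q_small; rewrite /small /big; lia.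
have k_small : small i m (i + k) by rewrite /small; lia.
have k_big : big i m (i + k) = false by rewrite /big; lia.
move: (split_w (small i m)) (split_w (big i m)) (ballot_dyck (p.+1 + n).+1).
rewrite count_small_dyck count_big_dyck count_small_p count_big_p.
by rewrite q_small q_big k_small k_big; lia.
Qed.

Lemma unbr_pos_collapse : unbr_pos i (map (collapse_letter i m) w) 0 0 None = Some p.
Proof.
set c := collapse_letter i m.
have c_ik : c (i + k) = i by apply/eqP; rewrite collapse_letter_eq /small; lia.
have w_split : w = take p w ++ i + k :: drop p.+1 w by rewrite -nth_p -drop_nth ?cat_take_drop.
have p_le : p <= size w by apply: ltnW.
have size_pre : size (map c (take p w)) = p by rewrite size_map size_takel.
rewrite {1}w_split map_cat [map c (_ :: _)]/= c_ik.
have [|o o_eq ->] := @unbr_pos_cat i (map c (take p w)) (i :: map c (drop p.+1 w)) 0 0 None.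
  move=> n; rewrite size_pre => n_lt; rewrite (nth_map 0) ?size_takel // nth_take // => /eqP.
  rewrite collapse_letter_eq -map_take take_takel ?(ltnW n_lt) //.
  by rewrite count_collapse_eq count_collapse_eqS //; apply: prefix_bracketed.
move: o_eq; rewrite count_collapse_eq count_collapse_eqS // count_small_p count_big_p => o_eq.
have -> : o = 0 by lia.
rewrite /= eqxx (ltn_eqF (ltnSn i)) add0n size_pre -[map c _]cats0.
have [|o' _ -> //] := @unbr_pos_cat i (map c (drop p.+1 w)) [::] 0 p.+1 (Some p).
move=> n; rewrite size_map size_drop => n_lt.
rewrite (nth_map 0) ?size_drop // nth_drop => /eqP; rewrite collapse_letter_eq => q_small.
rewrite -map_take count_collapse_eq count_collapse_eqS //.
by apply: suffix_bracketed => //; lia.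
Qed.

Lemma f_word_collapse : f_word i (map (collapse_letter i m) w) =
  Some (set_nth 0 (map (collapse_letter i m) w) p i.+1).
Proof. by rewrite /f_word unbr_pos_collapse. Qed.

Lemma std_f_collapse : std_word (set_nth 0 (map (collapse_letter i m) w) p i.+1) =
  map (cycle_letter (i + k) (i + m + k)) w.
Proof.
rewrite set_nth_map // nth_p.
change (std_word (map (fcollapse_letter i m k) w) = map (cycle_letter (i + k) (i + m + k)) w).
apply: std_word_map => // [x|x y xw yw].
  rewrite size_word mem_word /cycle_letter.
  by case: eqP => [->|_]; [|case: ifP => ?]; lia.
have ik_le : i + k <= i + m + k by lia.
have big_neq z : big i m z -> z != i + k by rewrite /big; apply: contraTneq => ->; lia.
have [gyx|gNyx] := eqVneq (fcollapse_letter i m k y) (fcollapse_letter i m k x); last first.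
  by rewrite andFb orbF fcollapse_cycle_ltn.
rewrite gyx ltnn /=.
case: (fcollapse_letter_eq_cases m_gt0 k_le_m gyx) => [->|/and4P[xs ys xk yk]|].
- by rewrite !ltnn.
- by rewrite index_small_ltn // cycle_letter_ltn.
case/andP => /orP[xb|/eqP->] /orP[yb|/eqP->].
- by rewrite index_big_ltn // cycle_letter_ltn ?big_neq.
- rewrite index_unbracketed cycle_letter_ltn_r ?big_neq //.
  have := index_big_ltn_unbracketed xb.
  have : index x w != p.
    by apply: contra_neq (big_neq _ xb) => e; rewrite -nth_p -e nth_index ?mem_big_dyck.
  lia.
- by rewrite index_unbracketed index_big_ltn_unbracketed // cycle_letter_ltn_l ?big_neq.
- by rewrite !ltnn.
Qed.

Lemma D_word_unbracketed : m = 1 ->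
  D_word i.+1 w = Some (swap_letters (i + k) (i + k).+1 w).
Proof.
move=> m1; have i2_big : big i m i.+2 by rewrite /big m1; lia.
have ab : index i w < index i.+1 w by rewrite index_small_ltn // /small; lia.
have cb : index i.+2 w < index i.+1 w.
  by have := index_big_ltn_last i2_big; rewrite m1 addn1.
have c_neq z : small i m z -> index i.+2 w != index z w.
  move=> zs; apply/eqP => /(index_inj 0 (mem_big_dyck i2_big) (mem_small_dyck zs)) e.
  by move: zs i2_big; rewrite -e /small /big; lia.
rewrite /D_word /=; have [k0|k1] : k = 0 \/ k = 1 by lia.
- have ac : index i w < index i.+2 w.
    have := index_big_ltn_unbracketed i2_big; rewrite -index_unbracketed k0 addn0 m1.
    by have := c_neq i; rewrite /small; lia.
  by rewrite k0 addn0 ifT //; lia.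
- have ca : index i.+2 w < index i w.
    by have := index_big_ltn_small (_ : 0 < k); rewrite k1 m1 !addn0 !addn1; apply.
  by rewrite k1 addn1 ifF ?ifT //; lia.
Qed.

End Unbracketed.

End DyckWord.

(** * Crystal skeleton edges and dual equivalences *)

Lemma row_word_tab_of_word sh v : size v = sumn sh -> row_word (tab_of_word sh v) = v.
Proof. by move=> size_v; rewrite /row_word /tab_of_word revK reshapeKr // sumn_rev size_v. Qed.

Lemma size_row_word (T : tableau) : size (row_word T) = sumn (map size T).
Proof. by rewrite /row_word size_flatten /shape map_rev sumn_rev. Qed.

Lemma row_word_std (b : tableau) : row_word (std b) = std_word (row_word b).
Proof. by rewrite row_word_tab_of_word // size_std_word size_row_word. Qed.

Lemma row_word_collapse i m T :
  row_word (collapse i m T) = map (collapse_letter i m) (row_word T).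
Proof. by rewrite /row_word /collapse map_flatten map_rev. Qed.

Lemma shape_collapse i m T : map size (collapse i m T) = map size T.
Proof. by rewrite /collapse -map_comp; apply: eq_map => r /=; rewrite size_map. Qed.

Lemma CS_edge_row_word la T i m T' v : CS_edge la T i m T' ->
  f_word i (map (collapse_letter i m) (row_word T)) = Some v -> size v = size (row_word T) ->
  row_word T' = std_word v.
Proof.
case=> _ _ _ [b' [fb ->]] fv size_v; move: fb; rewrite /f_tab row_word_collapse fv => -[<-].
by rewrite row_word_std row_word_tab_of_word // shape_collapse -size_row_word.
Qed.

Lemma swap_lettersK a b : involutive (swap_letters a b).
Proof.
move=> v; rewrite /swap_letters -map_comp -[RHS]map_id; apply: eq_map => x.
rewrite /comp; case: (eqVneq x a) => [->|xa].
  by rewrite /=; case: (eqVneq b a) => [->|_]; rewrite ?eqxx.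
case: (eqVneq x b) => [->|xb] /=; first by rewrite eqxx.
by rewrite (negbTE xa) (negbTE xb).
Qed.

Lemma D_word_swap j v v' : 0 < j -> D_word j v = Some v' ->
  exists a, v' = swap_letters a a.+1 v.
Proof.
move=> j_gt0; rewrite /D_word; case: ifP => _ => [[<-]|]; first by exists j.-1; rewrite prednK.
by case: ifP => // _ [<-]; exists j.
Qed.

Lemma DE_adjacent_swap la T T' : DE_adjacent la T T' ->
  exists a, row_word T' = swap_letters a a.+1 (row_word T).
Proof.
case=> -[_ _ [j [j_gt1 _ /(D_word_swap (ltnW j_gt1))[a e]]]]; exists a => //.
by rewrite e swap_lettersK.
Qed.

Lemma cycle_letter_succ a w : map (cycle_letter a a.+1) w = swap_letters a a.+1 w.
Proof.
apply: eq_map => x; rewrite /cycle_letter; case: (eqVneq x a) => [//|xa].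
case: (eqVneq x a.+1) => [->|xSa]; first by rewrite ltnSn.
by case: ifP => // ?; lia.
Qed.

Lemma cycle_letter_swap_le a b c w : a \in w ->
  map (cycle_letter a b) w = swap_letters c c.+1 w -> b <= a.+1.
Proof.
move=> aw /eq_in_map/(_ a aw); rewrite /cycle_letter eqxx => ->.
by repeat case: ifP => /eqP ?; lia.
Qed.

Theorem proposition4p2 (la : seq nat) (T T' : tableau) (i m : nat) :
  is_partition la ->
  CS_edge la T i m T' ->
  (DE_adjacent la T T' <-> size (iota i (2 * m).+1) = 3).
Proof.
move=> _ edge; have [T_SYT T'_SYT w_dyck _] := edge.
have /and4P[_ _ _ w_perm] := T_SYT.
have [m_gt0 i_gt0 iN _] := and4P w_dyck.
have [p [k p_unbr]] := exists_unbracketed w_perm w_dyck.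
have ik_w : i + k \in row_word T by case: p_unbr => p_lt <- *; apply: mem_nth.
have T'_word : row_word T' = map (cycle_letter (i + k) (i + m + k)) (row_word T).
  rewrite -(std_f_collapse w_perm w_dyck p_unbr).
  apply: (CS_edge_row_word edge (f_word_collapse w_perm w_dyck p_unbr)).
  by rewrite size_set_nth size_map; apply/maxn_idPr; case: p_unbr.
rewrite size_iota; split => [/DE_adjacent_swap[a]|m1].
  by rewrite T'_word => /(cycle_letter_swap_le ik_w); lia.
have {}m1 : m = 1 by lia.
left; split => //; exists i.+1; split; [lia | lia |].
rewrite T'_word m1 addnAC addn1 cycle_letter_succ.
by rewrite (D_word_unbracketed w_perm w_dyck p_unbr m1).
Qed.
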